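(* For every $k\ge1$ there is $c>0$ such that the following holds. For every $n\ge k$ and every pair $w,u$ of functions from $[n]^{(k)}$ to $\mathbb{R}$, $$\mathbb{E}_\pi|\langle w_\pi,u\rangle| \ge c\, \gamma(w,u) \sqrt n,$$ where $\pi$ is a uniformly random permutation of $[n]$.
   Context: $[n]=\{1,\dots,n\}$; $V^{(k)}$ is the family of $k$-subsets of $V$; $\langle w,u\rangle=\sum_{e\in V^{(k)}}w(e)u(e)$; for a permutation $\pi$ of $V$, $w_\pi(e)=w(\pi^{-1}(e))$. Fix distinct $x,y\in V$ and let $\tau=(xy)$; then $\gamma(w,u)=\mathbb{E}_{\pi,\sigma}|\langle w_\pi,u_\sigma\rangle-\langle w_{\tau\pi},u_\sigma\rangle|$ with $\pi,\sigma$ independent uniformly random permutations of $V$ (this does not depend on the choice of $x,y$). *)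

(* V = [n] is modelled as 'I_n; k-subsets as {set 'I_n} with #|e| = k. *)
From mathcomp Require Import all_boot all_order all_algebra all_fingroup.
From mathcomp Require Import all_reals.
Set Implicit Arguments. Unset Strict Implicit. Unset Printing Implicit Defensive.
Import Order.TTheory GRing.Theory Num.Theory.
Local Open Scope ring_scope.

Section Defs.
Variable R : realType.

Definition inner (n k : nat) (w u : {set 'I_n} -> R) : R :=
  \sum_(e : {set 'I_n} | #|e| == k) w e * u e.

Definition permf (n : nat) (pi : {perm 'I_n}) (w : {set 'I_n} -> R) : {set 'I_n} -> R :=
  fun e => w ((pi^-1)%g @: e).

Definition Eperm (n : nat) (f : {perm 'I_n} -> R) : R :=
  (\sum_(pi : {perm 'I_n}) f pi) / #|{: {perm 'I_n}}|%:R.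

(* the composition tau o pi as functions (x |-> tau (pi x)); in mathcomp's
   perm group (s * t) x = t (s x), so tau o pi = pi * tau. *)
Definition comp_after (n : nat) (tau pi : {perm 'I_n}) : {perm 'I_n} := (pi * tau)%g.

Definition gamma (n k : nat) (x y : 'I_n) (w u : {set 'I_n} -> R) : R :=
  Eperm (fun pi => Eperm (fun sigma =>
    `| inner k (permf pi w) (permf sigma u)
       - inner k (permf (comp_after (tperm x y) pi) w) (permf sigma u) |)).

End Defs.

(* Pair the points of [n] as {2i, 2i+1}, i < m = n/2, and for e in {0,1}^m let P_e
   exchange exactly the pairs with e_i = 1.  For a fixed permutation r, the function
   e |-> <w_{r P_e}, u> on the cube has degree at most k, because a k-set meets at most
   k pairs.  For such an f, Bonami's inequality E f^4 <= 9^k (E f^2)^2 gives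
   E f^2 <= 9^k (E|f|)^2; together with the total influence bound
   sum_j E (D_j f)^2 <= k E f^2 and Cauchy-Schwarz, sum_j E|D_j f| <= sqrt(m k 9^k) E|f|.
   Averaged over r, E|D_j f| is half the mean change of <w_pi, u> when pi is composed
   with the transposition of pair j, and averaging also over relabellings of u turns
   each of these into gamma(w,u).  Hence m gamma <= 2 sqrt(m k 9^k) E|<w_pi, u>|, which
   is the claim with c = 1 / (4 sqrt(k 9^k)). *)

From mathcomp Require Import all_boot all_order all_algebra all_fingroup.
From mathcomp Require Import all_reals.
From mathcomp Require Import ring lra zify.
Import Order.TTheory GRing.Theory Num.Theory.
Local Open Scope ring_scope.

Set Implicit Arguments. Unset Strict Implicit. Unset Printing Implicit Defensive.

Section Expectation.
Variable R : realType.

Definition Ex (U : finType) (f : U -> R) : R := (\sum_(x : U) f x) / #|U|%:R.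

Lemma ExD (U : finType) (f g : U -> R) : Ex (fun x => f x + g x) = Ex f + Ex g.
Proof. by rewrite /Ex big_split /= mulrDl. Qed.

Lemma ExZ (U : finType) (a : R) (f : U -> R) : Ex (fun x => a * f x) = a * Ex f.
Proof. by rewrite /Ex -mulr_sumr mulrA. Qed.

Lemma eq_Ex (U : finType) (f g : U -> R) : f =1 g -> Ex f = Ex g.
Proof. by move=> fg; rewrite /Ex (eq_bigr _ (fun x _ => fg x)). Qed.

Lemma Ex_cst (U : finType) (x0 : U) (c : R) : Ex (fun _ : U => c) = c.
Proof.
have U0 : #|U|%:R != 0 :> R by rewrite pnatr_eq0 -lt0n; apply/card_gt0P; exists x0.
by rewrite /Ex sumr_const -[c *+ _]mulr_natr -mulrA divff ?mulr1.
Qed.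

Lemma Ex_eq_cst (U : finType) (x0 : U) (f : U -> R) (c : R) :
  (forall x, f x = c) -> Ex f = c.
Proof. by move=> fc; rewrite (eq_Ex fc) (Ex_cst x0). Qed.

Lemma ler_Ex (U : finType) (f g : U -> R) : (forall x, f x <= g x) -> Ex f <= Ex g.
Proof. by move=> fg; rewrite /Ex ler_wpM2r ?invr_ge0 ?ler0n ?ler_sum. Qed.

Lemma Ex_ge0 (U : finType) (f : U -> R) : (forall x, 0 <= f x) -> 0 <= Ex f.
Proof. by move=> f0; rewrite /Ex mulr_ge0 ?invr_ge0 ?ler0n ?sumr_ge0. Qed.

Lemma reindex_Ex (U : finType) (h : U -> U) (f : U -> R) :
  injective h -> Ex (fun x => f (h x)) = Ex f.
Proof. by move=> hI; rewrite /Ex [in RHS](reindex_inj hI). Qed.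

Lemma exchange_Ex (U V : finType) (F : U -> V -> R) :
  Ex (fun x => Ex (fun y => F x y)) = Ex (fun y => Ex (fun x => F x y)).
Proof. by rewrite /Ex -!mulr_suml exchange_big -!mulrA [_^-1 * _^-1]mulrC. Qed.

Lemma Ex_sum (U I : finType) (F : I -> U -> R) :
  Ex (fun x => \sum_(j : I) F j x) = \sum_(j : I) Ex (F j).
Proof. by rewrite /Ex exchange_big mulr_suml. Qed.

Lemma sumr_CauchySchwarz (I : finType) (a b : I -> R) :
  (\sum_i a i * b i) ^+ 2 <= (\sum_i a i ^+ 2) * (\sum_i b i ^+ 2).
Proof.
have lagrange : ((\sum_i a i ^+ 2) * (\sum_i b i ^+ 2) - (\sum_i a i * b i) ^+ 2) *+ 2
    = \sum_i \sum_j (a i * b j - a j * b i) ^+ 2.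
  rewrite expr2 !big_distrlr /= mulr2n.
  rewrite [X in _ + (X - _)]exchange_big /= -!sumrB -big_split /=.
  by apply: eq_bigr => i _; rewrite -!sumrB -big_split; apply: eq_bigr => j _ /=; ring.
rewrite -subr_ge0 -(pmulrn_lge0 _ (isT : 0 < 2)%N) lagrange.
by do 2!(apply: sumr_ge0 => ? _); apply: sqr_ge0.
Qed.

Lemma Ex_CauchySchwarz (U : finType) (a b : U -> R) :
  Ex (fun x => a x * b x) ^+ 2 <= Ex (fun x => a x ^+ 2) * Ex (fun x => b x ^+ 2).
Proof.
rewrite /Ex mulrACA -expr2 exprMn ler_wpM2r ?sqr_ge0 //.
exact: sumr_CauchySchwarz.
Qed.

Lemma Ex_norm_sqr_le (U : finType) (x0 : U) (g : U -> R) :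
  Ex (fun x => `|g x|) ^+ 2 <= Ex (fun x => g x ^+ 2).
Proof.
have normK x : `|g x| ^+ 2 = g x ^+ 2 by rewrite real_normK ?num_real.
have := Ex_CauchySchwarz (fun _ => 1) (fun x => `|g x|).
by rewrite (eq_Ex (fun x => mul1r _)) (Ex_cst x0) expr1n mul1r (eq_Ex normK).
Qed.

End Expectation.

Lemma sqr_le_sqrtM (R : realType) (a b M : R) : 0 <= a -> 0 <= b -> 0 <= M ->
  a ^+ 2 <= M * b ^+ 2 -> a <= Num.sqrt M * b.
Proof.
move=> a0 b0 M0 le_ab; rewrite -(ger0_norm a0) -(ger0_norm b0) -!sqrtr_sqr -sqrtrM //.
by rewrite ler_sqrt // mulr_ge0 ?sqr_ge0.
Qed.

Section Cube.
Variables (R : realType) (m : nat).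
Notation T := {ffun 'I_m -> bool}.
Implicit Types (f g h : T -> R) (x y : T) (i j : 'I_m) (b c : bool).

Definition upd x i b : T := [ffun j => if j == i then b else x j].
Definition sg b : R := if b then 1 else -1.
Definition Ei i f x : R := (f (upd x i true) + f (upd x i false)) / 2.
Definition Di i f x : R := (f (upd x i true) - f (upd x i false)) / 2.
Definition ignores i f := forall x b, f (upd x i b) = f x.
Definition x0 : T := [ffun => false].

Lemma upd_id x i : upd x i (x i) = x.
Proof. by apply/ffunP => j; rewrite ffunE; case: eqP => // ->. Qed.

Lemma upd_upd x i b c : upd (upd x i b) i c = upd x i c.
Proof. by apply/ffunP => j; rewrite !ffunE; case: eqP. Qed.

Lemma updC x i j b c : i != j -> upd (upd x i b) j c = upd (upd x j c) i b.
Proof.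
move=> ij; apply/ffunP => l; rewrite !ffunE.
by case: (eqVneq l j) => [->|//]; rewrite eq_sym (negPf ij).
Qed.

Lemma upd_eq x i b : upd x i b i = b.
Proof. by rewrite ffunE eqxx. Qed.

Lemma upd_neq x i j b : j != i -> upd x i b j = x j.
Proof. by move=> ji; rewrite ffunE (negPf ji). Qed.

Lemma Ei_Di_decomp f i x : f x = Ei i f x + sg (x i) * Di i f x.
Proof. by rewrite /Ei /Di /sg -{1}(upd_id x i); case: (x i); field. Qed.

Lemma Ei_ignores f i : ignores i (Ei i f).
Proof. by move=> x b; rewrite /Ei !upd_upd. Qed.

Lemma Di_ignores f i : ignores i (Di i f).
Proof. by move=> x b; rewrite /Di !upd_upd. Qed.

Lemma Di_ignored f i x : ignores i f -> Di i f x = 0.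
Proof. by move=> fi; rewrite /Di !fi subrr mul0r. Qed.

Lemma Ex_sg_ignores i h : ignores i h -> Ex (fun x => sg (x i) * h x) = 0.
Proof.
move=> hi; pose flip x := upd x i (~~ x i).
have flipK : involutive flip by move=> x; rewrite /flip upd_upd upd_eq negbK upd_id.
have : Ex (fun x => sg (x i) * h x) = - Ex (fun x => sg (x i) * h x).
  rewrite -[LHS](reindex_Ex _ (inv_inj flipK)) -mulN1r -ExZ.
  by apply: eq_Ex => x; rewrite /flip hi upd_eq /sg; case: (x i); rewrite /= ?opprK; ring.
lra.
Qed.

Lemma sg_sqr b : sg b ^+ 2 = 1.
Proof. by case: b; rewrite /sg ?sqrrN expr1n. Qed.

Lemma Ex_sqr_split i g h : ignores i g -> ignores i h ->
  Ex (fun x => (g x + sg (x i) * h x) ^+ 2) =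
  Ex (fun x => g x ^+ 2) + Ex (fun x => h x ^+ 2).
Proof.
move=> gi hi; rewrite -ExD -[RHS]addr0 -(@Ex_sg_ignores i (fun x => 2 * g x * h x)).
  by rewrite -ExD; apply: eq_Ex => x; have := sg_sqr (x i); nra.
by move=> x b; rewrite gi hi.
Qed.

Lemma Ex_pow4_split i g h : ignores i g -> ignores i h ->
  Ex (fun x => (g x + sg (x i) * h x) ^+ 4) =
  Ex (fun x => g x ^+ 4) + 6 * Ex (fun x => g x ^+ 2 * h x ^+ 2) + Ex (fun x => h x ^+ 4).
Proof.
move=> gi hi; rewrite -ExZ -!ExD -[RHS]addr0.
rewrite -(@Ex_sg_ignores i (fun x => 4 * g x ^+ 3 * h x + 4 * g x * h x ^+ 3)).
  rewrite -ExD; apply: eq_Ex => x; have := sg_sqr (x i); set s := sg _ => s2.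
  have -> : (g x + s * h x) ^+ 4 = g x ^+ 4 + 6 * (s ^+ 2 * (g x ^+ 2 * h x ^+ 2))
     + (s ^+ 2) ^+ 2 * h x ^+ 4 + s * (4 * g x ^+ 3 * h x + s ^+ 2 * (4 * g x * h x ^+ 3)) by ring.
  by rewrite s2; ring.
by move=> x b; rewrite gi hi.
Qed.

Definition junta (S : {set 'I_m}) f := forall x y, {in S, x =1 y} -> f x = f y.

(* A sum of k-juntas whose coordinates all lie in A; the set A is only the measure
   for the induction principle [lowdeg_ind]. *)
Definition lowdeg (k : nat) (A : {set 'I_m}) f :=
  exists N (S : 'I_N -> {set 'I_m}) (F : 'I_N -> T -> R),
    (forall l, [/\ S l \subset A, #|S l| <= k & junta (S l) (F l)])%N /\
    forall x, f x = \sum_l F l x.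

Lemma Di_junta (S : {set 'I_m}) f i x : junta S f -> i \notin S -> Di i f x = 0.
Proof.
move=> fS iS; rewrite /Di (fS (upd x i true) (upd x i false)) ?subrr ?mul0r //.
by move=> j jS; rewrite !upd_neq //; apply: contraNneq iS => <-.
Qed.

Lemma junta_upd (S : {set 'I_m}) f i b x y :
  junta S f -> {in S :\ i, x =1 y} -> f (upd x i b) = f (upd y i b).
Proof.
move=> fS xy; apply: fS => j jS; rewrite !ffunE; case: eqP => // /eqP ji.
by apply: xy; rewrite !inE ji.
Qed.

Lemma lowdeg_Ei k A f i : lowdeg k A f -> lowdeg k (A :\ i) (Ei i f).
Proof.
case=> N [S [F [SF fF]]]; exists N, (fun l => S l :\ i), (fun l => Ei i (F l)); split.
  move=> l; have [SA Sk FS] := SF l; split.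
  - exact: setSD.
  - exact: leq_trans (subset_leq_card (subD1set _ _)) Sk.
  - by move=> x y xy; rewrite /Ei !(junta_upd _ FS xy).
by move=> x; rewrite /Ei !fF -big_split mulr_suml.
Qed.

Lemma lowdeg_Di k A f i : lowdeg k A f -> lowdeg k.-1 (A :\ i) (Di i f).
Proof.
case=> N [S [F [SF fF]]].
exists N, (fun l => if i \in S l then S l :\ i else set0), (fun l => Di i (F l)); split.
  move=> l; have [SA Sk FS] := SF l; case: ifPn => iS; split.
  - exact: setSD.
  - by move: Sk; rewrite (cardsD1 i (S l)) iS add1n; case: k {SF fF}.
  - by move=> x y xy; rewrite /Di !(junta_upd _ FS xy).
  - exact: sub0set.
  - by rewrite cards0.
  - by move=> x y _; rewrite !(Di_junta _ FS).
by move=> x; rewrite /Di !fF -sumrB mulr_suml.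
Qed.

Lemma lowdeg_const k A f : lowdeg k A f -> k = 0%N \/ A = set0 -> forall x, f x = f x0.
Proof.
case=> N [S [F [SF fF]]] kA x; rewrite !fF; apply: eq_bigr => l _.
have [SA Sk FS] := SF l; apply: FS => j; suff -> : S l = set0 by rewrite inE.
case: kA => [k0|A0]; first by apply/eqP; rewrite -cards_eq0 -leqn0 -k0.
by apply/eqP; rewrite -subset0 -A0.
Qed.

Lemma lowdeg_ind (Q : nat -> (T -> R) -> Prop) :
  (forall k f, (forall x, f x = f x0) -> Q k f) ->
  (forall k f i, Q k.+1 (Ei i f) -> Q k (Di i f) -> Q k.+1 f) ->
  forall k A f, lowdeg k A f -> Q k f.
Proof.
move=> Qcst Qstep k A f; move: {2}#|A| (leqnn #|A|) => N.
elim: N k A f => [|N IH] k A f hA hf.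
  by apply/Qcst/(lowdeg_const hf); right; apply/eqP; rewrite -cards_eq0 -leqn0.
have [A0|[i iA]] := set_0Vmem A; first by apply/Qcst/(lowdeg_const hf); right.
case: k hf => [|k] hf; first by apply/Qcst/(lowdeg_const hf); left.
have hAi : (#|A :\ i| <= N)%N by move: hA; rewrite (cardsD1 i A) iA.
by apply: (Qstep _ _ i); [apply: IH (lowdeg_Ei i hf) | apply: IH (lowdeg_Di i hf)].
Qed.

Lemma Ex_pow_decomp f i p :
  Ex (fun x => f x ^+ p) = Ex (fun x => (Ei i f x + sg (x i) * Di i f x) ^+ p).
Proof. by apply: eq_Ex => x; rewrite -Ei_Di_decomp. Qed.

Lemma bonami k A f : lowdeg k A f ->
  Ex (fun x => f x ^+ 4) <= 9 ^+ k * Ex (fun x => f x ^+ 2) ^+ 2.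
Proof.
move=> hf; elim/lowdeg_ind: k f / hf => [k f fc | k f i IHg IHh].
  have Ex_pow p : Ex (fun x => f x ^+ p) = f x0 ^+ p by apply: (Ex_eq_cst x0) => x; rewrite fc.
  by rewrite !Ex_pow -exprM; apply: ler_peMl; rewrite ?exprn_even_ge0 // exprn_ege1 ?ler1n.
set g := Ei i f in IHg; set h := Di i f in IHh.
have gi : ignores i g by apply: Ei_ignores.
have hi : ignores i h by apply: Di_ignores.
rewrite !(Ex_pow_decomp f i) Ex_pow4_split // Ex_sqr_split //.
have sqr_sqr (p : T -> R) : Ex (fun x => (p x ^+ 2) ^+ 2) = Ex (fun x => p x ^+ 4).
  by apply: eq_Ex => x; rewrite -exprM.
have := Ex_CauchySchwarz (fun x => g x ^+ 2) (fun x => h x ^+ 2); rewrite !sqr_sqr.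
move: IHg IHh; rewrite exprS.
set G4 := Ex (fun x => g x ^+ 4); set H4 := Ex (fun x => h x ^+ 4).
set C := Ex (fun x => g x ^+ 2 * h x ^+ 2).
set a := Ex (fun x => g x ^+ 2); set b := Ex (fun x => h x ^+ 2).
set t := 9 ^+ k => IHg IHh CS.
have [a0 b0] : 0 <= a /\ 0 <= b by split; apply: Ex_ge0 => x; apply: sqr_ge0.
have [G40 H40] : 0 <= G4 /\ 0 <= H4 by split; apply: Ex_ge0 => x; apply: exprn_even_ge0.
have C0 : 0 <= C by apply: Ex_ge0 => x; rewrite mulr_ge0 ?sqr_ge0.
have t1 : 1 <= t by rewrite exprn_ege1 ?ler1n.
have Cle : C <= 3 * t * a * b.
  have tab0 : 0 <= 3 * t * a * b by apply/mulr_ge0/b0/mulr_ge0/a0; lra.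
  rewrite -ler_sqr ?nnegrE //; apply: (le_trans CS).
  rewrite (_ : _ ^+ 2 = (9 * t * a ^+ 2) * (t * b ^+ 2)); last by ring.
  exact: ler_pM.
nra.
Qed.

Lemma Di_ignores_other i j f : i != j -> ignores i f -> ignores i (Di j f).
Proof. by move=> ij fi x b; rewrite /Di !(updC _ _ _ ij) !fi. Qed.

Lemma Ex_sqr_Di_split f i j :
  Ex (fun x => Di j f x ^+ 2) =
  Ex (fun x => Di j (Ei i f) x ^+ 2) + Ex (fun x => Di j (Di i f) x ^+ 2)
  + (j == i)%:R * Ex (fun x => Di i f x ^+ 2).
Proof.
have [->|ji] := eqVneq j i.
  have Di0 g : ignores i g -> Ex (fun x => Di i g x ^+ 2) = 0.
    by move=> gi; apply: (Ex_eq_cst x0) => x; rewrite Di_ignored ?expr0n.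
  by rewrite (Di0 _ (Ei_ignores f i)) (Di0 _ (Di_ignores f i)) !add0r mul1r.
rewrite mul0r addr0 -(Ex_sqr_split (i := i)); last 2 first.
- by apply/Di_ignores_other/Ei_ignores; rewrite eq_sym.
- by apply/Di_ignores_other/Di_ignores; rewrite eq_sym.
apply: eq_Ex => x; congr (_ ^+ 2).
have ij : i != j by rewrite eq_sym.
rewrite [Di j f x]/Di !(Ei_Di_decomp f i (upd x j _)) !upd_neq //.
set g := Ei i f; set h := Di i f; rewrite /Di; ring.
Qed.

Lemma total_influence k A f : lowdeg k A f ->
  \sum_j Ex (fun x => Di j f x ^+ 2) <= k%:R * Ex (fun x => f x ^+ 2).
Proof.
move=> hf; elim/lowdeg_ind: k f / hf => [k f fc | k f i IHg IHh].
  rewrite big1 => [|j _]; first by rewrite mulr_ge0 ?ler0n // Ex_ge0 // => x; apply: sqr_ge0.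
  by apply: (Ex_eq_cst x0) => x; rewrite /Di !fc subrr mul0r expr0n.
rewrite (eq_bigr _ (fun j _ => Ex_sqr_Di_split f i j)) !big_split /=.
have -> : \sum_j (j == i)%:R * Ex (fun x => Di i f x ^+ 2) = Ex (fun x => Di i f x ^+ 2).
  by rewrite (bigD1 i) //= eqxx mul1r big1 ?addr0 // => j /negPf->; rewrite mul0r.
rewrite (Ex_pow_decomp f i) Ex_sqr_split; [|exact: Ei_ignores|exact: Di_ignores].
move: IHg IHh; set a := Ex (fun x => Ei i f x ^+ 2); set b := Ex (fun x => Di i f x ^+ 2).
have b0 : 0 <= b by apply: Ex_ge0 => x; apply: sqr_ge0.
rewrite -natr1 => IHg IHh; nra.
Qed.

Lemma lowdeg_Ex_sqr_le k A f : lowdeg k A f ->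
  Ex (fun x => f x ^+ 2) <= 9 ^+ k * Ex (fun x => `|f x|) ^+ 2.
Proof.
(* Interpolate the L2 norm between L1 and L4 by two Cauchy-Schwarz steps. *)
move=> /bonami hyper.
have normK x : `|f x| ^+ 2 = f x ^+ 2 by rewrite real_normK ?num_real.
have N2_le : Ex (fun x => f x ^+ 2) ^+ 2 <= Ex (fun x => `|f x|) * Ex (fun x => `|f x| ^+ 3).
  pose a x := Num.sqrt `|f x|; pose b x := `|f x| * Num.sqrt `|f x|.
  have ab x : a x * b x = f x ^+ 2 by rewrite /a /b mulrCA -expr2 sqr_sqrtr // -expr2 normK.
  have aa x : a x ^+ 2 = `|f x| by rewrite /a /b sqr_sqrtr.
  have bb x : b x ^+ 2 = `|f x| ^+ 3 by rewrite /a /b exprMn sqr_sqrtr // -exprSr.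
  by have := Ex_CauchySchwarz a b; rewrite (eq_Ex ab) (eq_Ex aa) (eq_Ex bb).
have N3_le : Ex (fun x => `|f x| ^+ 3) ^+ 2 <= Ex (fun x => f x ^+ 2) * Ex (fun x => f x ^+ 4).
  pose a x := `|f x|; pose b x := `|f x| ^+ 2.
  have ab x : a x * b x = `|f x| ^+ 3 by rewrite /a /b -exprS.
  have aa x : a x ^+ 2 = f x ^+ 2 by rewrite /a /b normK.
  have bb x : b x ^+ 2 = f x ^+ 4 by rewrite /a /b normK -exprM.
  by have := Ex_CauchySchwarz a b; rewrite (eq_Ex ab) (eq_Ex aa) (eq_Ex bb).
move: hyper N2_le N3_le; set N2 := Ex (fun x => f x ^+ 2); set N4 := Ex (fun x => f x ^+ 4).
set N1 := Ex (fun x => `|f x|); set N3 := Ex (fun x => `|f x| ^+ 3); set K := 9 ^+ k.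
move=> hyper N2_le N3_le.
have N20 : 0 <= N2 by apply: Ex_ge0 => x; apply: sqr_ge0.
have [N10 N30] : 0 <= N1 /\ 0 <= N3 by split; apply: Ex_ge0 => x; rewrite ?exprn_ge0.
have [->|N2_neq0] := eqVneq N2 0; first by rewrite mulr_ge0 ?exprn_ge0 ?sqr_ge0.
have N2_gt0 : 0 < N2 by rewrite lt_def N2_neq0.
rewrite -(ler_pM2r (exprn_gt0 3 N2_gt0)).
have -> : N2 * N2 ^+ 3 = (N2 ^+ 2) ^+ 2 by ring.
have -> : K * N1 ^+ 2 * N2 ^+ 3 = N1 ^+ 2 * (N2 * (K * N2 ^+ 2)) by ring.
apply: (@le_trans _ _ ((N1 * N3) ^+ 2)); first by rewrite ler_sqr ?nnegrE ?sqr_ge0 // mulr_ge0.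
by rewrite exprMn ler_wpM2l ?sqr_ge0 // (le_trans N3_le) ?ler_wpM2l.
Qed.

Lemma sum_Ex_norm_Di_le k f : lowdeg k setT f ->
  \sum_j Ex (fun x => `|Di j f x|) <= Num.sqrt (m%:R * (k%:R * 9 ^+ k)) * Ex (fun x => `|f x|).
Proof.
move=> hf; apply: sqr_le_sqrtM.
- by apply: sumr_ge0 => j _; apply: Ex_ge0.
- by apply: Ex_ge0.
- by rewrite !mulr_ge0 ?exprn_ge0.
have CS : (\sum_j Ex (fun x => `|Di j f x|)) ^+ 2 <= m%:R * \sum_j Ex (fun x => `|Di j f x|) ^+ 2.
  have := sumr_CauchySchwarz (fun _ => 1) (fun j => Ex (fun x => `|Di j f x|)).
  by under eq_bigr do rewrite mul1r; rewrite expr1n sumr_const card_ord -mulr_natl mulr1.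
apply: le_trans CS _; rewrite -mulrA ler_wpM2l //.
apply: (@le_trans _ _ (\sum_j Ex (fun x => Di j f x ^+ 2))).
  by apply: ler_sum => j _; apply: (Ex_norm_sqr_le x0).
apply: le_trans (total_influence hf) _.
by rewrite -mulrA ler_wpM2l // (lowdeg_Ex_sqr_le hf).
Qed.

End Cube.

Section SwapPairs.
Variable n : nat.
Notation m := n./2.
Notation T := {ffun 'I_m -> bool}.

Definition partner (z : nat) : nat := (~~ odd z) + (z./2).*2.

Lemma partnerK : involutive partner.
Proof.
move=> z; rewrite /partner oddD odd_double half_bit_double oddb addbF negbK.
exact: odd_double_half.
Qed.

Lemma half_partner z : (partner z)./2 = z./2.
Proof. by rewrite /partner half_bit_double. Qed.

(* [swap_pairs e] exchanges 2i and 2i+1 for every i with [e i]; when n is odd, the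
   last point is fixed. *)
Definition swap_pairs_fun (e : T) (z : 'I_n) : 'I_n :=
  if insub (z./2) is Some i then (if e i then insubd z (partner z) else z) else z.

Lemma swap_pairs_fun_val e (z : 'I_n) : val (swap_pairs_fun e z) =
  if insub (z./2) is Some i then (if e i then partner z else z) else z.
Proof.
rewrite /swap_pairs_fun; case: insubP => [i lt_zm _|//].
by case: (e i) => //; rewrite val_insubd; case: ifP => //; rewrite /partner; lia.
Qed.

Lemma half_swap_pairs_fun e z : (val (swap_pairs_fun e z))./2 = z./2.
Proof.
by rewrite swap_pairs_fun_val; case: insub => [i|] //; case: (e i); rewrite ?half_partner.
Qed.

Lemma swap_pairs_funK e : involutive (swap_pairs_fun e).
Proof.
move=> z; apply: val_inj; rewrite swap_pairs_fun_val half_swap_pairs_fun.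
case E: (insub (z./2)) => [i|]; rewrite swap_pairs_fun_val E //.
by case: (e i) => //; apply: partnerK.
Qed.

Definition swap_pairs (e : T) : {perm 'I_n} := perm (can_inj (swap_pairs_funK e)).

Lemma swap_pairsE e z : swap_pairs e z = swap_pairs_fun e z.
Proof. by rewrite permE. Qed.

Lemma swap_pairsV e : (swap_pairs e)^-1%g = swap_pairs e.
Proof.
apply/permP => z; apply: (@perm_inj _ (swap_pairs e)).
by rewrite permKV !swap_pairsE swap_pairs_funK.
Qed.

Definition swap_pair (j : 'I_m) : {perm 'I_n} := swap_pairs [ffun i => i == j].

Lemma swap_pairs_upd e j :
  swap_pairs (upd e j true) = (swap_pairs (upd e j false) * swap_pair j)%g.
Proof.
apply/permP => z; rewrite permM /swap_pair; apply: val_inj.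
rewrite !swap_pairsE swap_pairs_fun_val [in RHS]swap_pairs_fun_val half_swap_pairs_fun.
case E: (insub (z./2)) => [i|]; rewrite ?swap_pairs_fun_val E // !ffunE.
by case: eqP => _ //; rewrite partnerK.
Qed.

Lemma swap_pairs_agree (S : {set 'I_m}) (e e' : T) (z : 'I_n) :
  {in S, e =1 e'} -> (forall i : 'I_m, z./2 = val i -> i \in S) ->
  swap_pairs e z = swap_pairs e' z.
Proof.
move=> ee' zS; apply: val_inj; rewrite !swap_pairsE !swap_pairs_fun_val.
by case: insubP => [i _ zi|//]; rewrite ee' // zS.
Qed.

Lemma swap_pair_tperm (j : 'I_m) : exists a b : 'I_n, a != b /\ swap_pair j = tperm a b.
Proof.
have swapE z : val (swap_pair j z) = if (val z)./2 == val j then partner z else z.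
  rewrite swap_pairsE swap_pairs_fun_val; case: insubP => [i _ zi|].
    by rewrite ffunE -zi; congr (if _ then _ else _); apply/eqP/eqP => [->|/val_inj].
  by case: eqP => // ->; rewrite ltn_ord.
have lt_b : ((val j).*2.+1 < n)%N.
  rewrite -doubleS -[n in (_ <= n)%N]odd_double_half (leq_trans _ (leq_addl _ _)) // leq_double.
  exact: ltn_ord.
have lt_a : ((val j).*2 < n)%N := ltnW lt_b.
exists (Ordinal lt_a), (Ordinal lt_b); split; first by rewrite -val_eqE /= neq_ltn ltnSn.
apply/permP => z; apply: val_inj; rewrite swapE.
case: tpermP => [->|->|za zb] /=.
- by rewrite doubleK eqxx /partner odd_double doubleK.
- by rewrite uphalf_double eqxx /partner /= odd_double uphalf_double.
case: eqP => // zj; have := odd_double_half z; rewrite zj.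
by case: odd => zE; [case: zb | case: za]; apply: val_inj; rewrite /= -zE ?add1n ?add0n.
Qed.

End SwapPairs.

Section Averaging.
Variables (R : realType) (n k : nat) (w u : {set 'I_n} -> R).
Notation m := n./2.
Notation T := {ffun 'I_m -> bool}.

Definition X (r : {perm 'I_n}) : R := inner k (permf r w) u.
Definition X_swaps (r : {perm 'I_n}) (e : T) : R := X (r * swap_pairs e)%g.
Definition G (s : {perm 'I_n}) : R := Ex (fun r : {perm 'I_n} => `|X (r * s)%g - X r|).

Lemma lowdeg_X_swaps r : lowdeg k setT (X_swaps r).
Proof.
(* The term of a k-set depends only on the at most k pairs it meets. *)
pose A := [pred e : {set 'I_n} | #|e| == k].
pose pairs_of (e : {set 'I_n}) := [set i : 'I_m | [exists z in e, (val z)./2 == val i]].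
exists #|A|, (fun l : 'I_#|A| => pairs_of (enum_val l)).
exists (fun (l : 'I_#|A|) e => w ((r * swap_pairs e)^-1%g @: enum_val l) * u (enum_val l)).
split=> [l|e]; last first.
  rewrite /X_swaps /X /inner /permf.
  rewrite -(big_enum_val (A := A) (fun s => w ((r * swap_pairs e)^-1%g @: s) * u s)) /=.
  by apply: eq_bigl => s; rewrite !inE.
split; first exact: subsetT.
- have /eqP <- : enum_val l \in A by apply: enum_valP.
  rewrite -(card_imset _ (@Some_inj _)).
  apply: leq_trans (leq_imset_card (fun z : 'I_n => insub (val z)./2) _).
  apply: subset_leq_card; apply/subsetP => _ /imsetP [i /[!inE] /existsP [z /andP [zE /eqP zi]] ->].
  by apply/imsetP; exists z => //; rewrite zi valK.
- move=> e e' ee'; congr (w _ * _); apply: eq_in_imset => z zE.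
  rewrite !invMg !permM !swap_pairsV; congr (_ _); apply: (swap_pairs_agree ee') => i zi.
  by rewrite inE; apply/existsP; exists z; rewrite zE zi eqxx.
Qed.

Lemma Ex_norm_X_swaps (e : T) : Ex (fun r => `|X_swaps r e|) = Ex (fun r => `|X r|).
Proof. exact: (reindex_Ex (fun r => `|X r|) (mulIg (swap_pairs e))). Qed.

Lemma Ex_norm_Di_X_swaps (j : 'I_m) (e : T) :
  Ex (fun r => `|Di j (X_swaps r) e|) = G (swap_pair j) / 2.
Proof.
rewrite /G mulrC -ExZ -[RHS](reindex_Ex _ (mulIg (swap_pairs (upd e j false)))).
apply: eq_Ex => r; rewrite /Di /X_swaps swap_pairs_upd mulgA.
by rewrite normrM mulrC gtr0_norm ?invr_gt0.
Qed.

Lemma sum_G_swap_pair_le :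
  \sum_(j < m) G (swap_pair j) <=
  2 * Num.sqrt (m%:R * (k%:R * 9 ^+ k)) * Ex (fun r : {perm 'I_n} => `|X r|).
Proof.
have := ler_Ex (fun r => sum_Ex_norm_Di_le (lowdeg_X_swaps r)).
rewrite Ex_sum ExZ exchange_Ex (eq_Ex Ex_norm_X_swaps) (Ex_cst (x0 m)).
under eq_bigr do rewrite exchange_Ex (eq_Ex (Ex_norm_Di_X_swaps _)) (Ex_cst (x0 m)).
by rewrite -mulr_suml ler_pdivrMr // [_ * 2]mulrC [2 * (_ * _)]mulrA.
Qed.

End Averaging.

Section Conjugation.
Variables (R : realType) (n k : nat).
Implicit Types (w u : {set 'I_n} -> R) (p q r s : {perm 'I_n}).

Lemma inner_permf w u p s :
  inner k (permf p w) (permf s u) = inner k (permf (p * s^-1)%g w) u.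
Proof.
rewrite /inner /permf (reindex_inj (imset_inj (@perm_inj _ s))) /=.
apply: eq_big => [e|e _]; first by rewrite card_imset //; apply: perm_inj.
congr (w _ * u _); rewrite -imset_comp.
  by apply: eq_imset => z /=; rewrite invMg invgK permM.
by rewrite (eq_imset (g := id)) ?imset_id // => z /=; rewrite permK.
Qed.

Lemma X_permf w u q r : X k w (permf q u) r = X k w u (r * q^-1)%g.
Proof. exact: inner_permf. Qed.

Lemma G_permf w u q s : G k w (permf q u) s = G k w u (s ^ q^-1)%g.
Proof.
rewrite /G -[RHS](reindex_Ex _ (mulIg q^-1%g)); apply: eq_Ex => r.
by rewrite !X_permf /conjg invgK !mulgA mulgKV.
Qed.

Lemma Ex_norm_X_permf w u q :
  Ex (fun r => `|X k w (permf q u) r|) = Ex (fun r => `|X k w u r|).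
Proof.
rewrite (eq_Ex (fun r => congr1 Num.norm (X_permf w u q r))).
exact: (reindex_Ex (fun r => `|X k w u r|) (mulIg q^-1%g)).
Qed.

Lemma gamma_Ex_G (x y : 'I_n) w u :
  gamma k x y w u = Ex (fun q => G k w u (tperm x y ^ q)%g).
Proof.
rewrite /gamma /Eperm -/(Ex _).
under eq_Ex do rewrite -/(Ex _); under eq_Ex do under eq_Ex do rewrite !inner_permf.
rewrite exchange_Ex -[RHS](reindex_Ex _ (@invg_inj _)); apply: eq_Ex => s.
rewrite /G -(reindex_Ex _ (mulIg s)); apply: eq_Ex => r.
by rewrite distrC /comp_after /conjg invgK !mulgA mulgK.
Qed.

Lemma tperm_conj (x y a b : 'I_n) : x != y -> a != b ->
  exists p, (tperm x y ^ p)%g = tperm a b.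
Proof.
move=> xy ab; pose y' := tperm x a y.
have y'a : y' != a by rewrite /y' -{2}(tpermL x a) (inj_eq perm_inj) eq_sym.
exists (tperm x a * tperm y' b)%g.
by rewrite tpermJ !permM tpermL tpermD // ?tpermL // eq_sym.
Qed.

Lemma Ex_G_conj_tperm w u (x y a b : 'I_n) : x != y -> a != b ->
  Ex (fun q => G k w u (tperm a b ^ q)%g) = Ex (fun q => G k w u (tperm x y ^ q)%g).
Proof.
move=> xy ab; have [p <-] := tperm_conj xy ab.
rewrite -(reindex_Ex (fun q => G k w u (tperm x y ^ q)%g) (mulgI p)).
by apply: eq_Ex => q; rewrite conjgM.
Qed.

End Conjugation.

Lemma Ex_G_conj_swap_pair (R : realType) (n k : nat) (x y : 'I_n) (w u : {set 'I_n} -> R)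
    (j : 'I_n./2) :
  x != y -> Ex (fun q => G k w u (swap_pair j ^ q^-1)%g) = gamma k x y w u.
Proof.
move=> xy; rewrite (reindex_Ex (fun q => G k w u (swap_pair j ^ q)%g) (@invg_inj _)).
have [a [b [ab ->]]] := swap_pair_tperm j.
by rewrite (Ex_G_conj_tperm _ _ _ xy ab) gamma_Ex_G.
Qed.

Lemma half_mul_gamma_le (R : realType) (n k : nat) (x y : 'I_n) (w u : {set 'I_n} -> R) :
  x != y ->
  (n./2)%:R * gamma k x y w u <=
  2 * Num.sqrt ((n./2)%:R * (k%:R * 9 ^+ k)) * Ex (fun r => `|X k w u r|).
Proof.
move=> xy; set bound := (X in _ <= X).
have per q : \sum_(j < n./2) G k w u (swap_pair j ^ q^-1)%g <= bound.
  rewrite /bound -(Ex_norm_X_permf k w u q); under eq_bigr do rewrite -G_permf.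
  exact: sum_G_swap_pair_le.
have := ler_Ex per; rewrite (Ex_cst 1%g) Ex_sum.
by under eq_bigr do rewrite (Ex_G_conj_swap_pair k w u _ xy); rewrite sumr_const card_ord mulr_natl.
Qed.

Lemma gamma_mul_sqrt_le (R : realType) (n k : nat) (x y : 'I_n) (w u : {set 'I_n} -> R) :
  x != y ->
  gamma k x y w u * Num.sqrt n%:R <=
  4 * Num.sqrt (k%:R * 9 ^+ k) * Ex (fun r => `|X k w u r|).
Proof.
move=> xy; have := half_mul_gamma_le k w u xy; rewrite sqrtrM ?ler0n //.
set g := gamma _ _ _ _ _; set sm := Num.sqrt (n./2)%:R; set sK := Num.sqrt (k%:R * _).
set E := Ex _ => le_gamma.
have m_gt0 : (0 < n./2)%N.
  by case: x y xy {le_gamma g} => [x ?] [y ?]; rewrite -val_eqE /= => /eqP; lia.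
have sm_gt0 : 0 < sm by rewrite sqrtr_gt0 ltr0n.
have sm_sqr : sm ^+ 2 = (n./2)%:R by rewrite sqr_sqrtr ?ler0n.
have le_sqrt_n : Num.sqrt n%:R <= 2 * sm.
  rewrite -ler_sqr ?nnegrE ?mulr_ge0 ?sqrtr_ge0 // exprMn sm_sqr sqr_sqrtr ?ler0n //.
  by rewrite -natrX -natrM ler_nat; lia.
have g_ge0 : 0 <= g by rewrite /g gamma_Ex_G; do 2!apply: Ex_ge0 => ?.
have le_g : g * sm <= 2 * sK * E.
  by rewrite -(ler_pM2l sm_gt0); rewrite -sm_sqr in le_gamma; lra.
by apply: le_trans (ler_wpM2l g_ge0 le_sqrt_n) _; lra.
Qed.

Theorem lemma4p2 (R : realType) (k : nat) : (1 <= k)%N ->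
  exists c : R, 0 < c /\
    forall (n : nat) (x y : 'I_n) (w u : {set 'I_n} -> R),
      (k <= n)%N -> x != y ->
      c * gamma k x y w u * Num.sqrt (n%:R) <=
      Eperm (fun pi : {perm 'I_n} => `| inner k (permf pi w) u |).
Proof.
move=> k_gt0; set K : R := k%:R * 9 ^+ k.
have sK_gt0 : 0 < Num.sqrt K by rewrite sqrtr_gt0 mulr_gt0 ?ltr0n ?exprn_gt0.
exists (4 * Num.sqrt K)^-1; split=> [|n x y w u _ xy]; first by rewrite invr_gt0 mulr_gt0.
rewrite -mulrA ler_pdivrMl ?mulr_gt0 //.
exact: gamma_mul_sqrt_le.
Qed.
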